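(* Let $F$ be a field, $V$ a nonzero vector space over $F$, $\Gamma$ a nonempty set, $\varphi:\Gamma\to\Gamma$ a map and $\mathfrak{w}=(\mathfrak{w}_\alpha)_{\alpha\in\Gamma}\in F^\Gamma$. Let $\sigma_{\varphi,\mathfrak{w}}:V^\Gamma\to V^\Gamma$, $(x_\alpha)_{\alpha\in\Gamma}\mapsto(\mathfrak{w}_\alpha x_{\varphi(\alpha)})_{\alpha\in\Gamma}$. Put \[\mathsf{M}:=\Big\{r\in F\setminus\{0\}: \exists\theta\in P(\varphi)\setminus\downarrow\mathfrak{Z}\ \ \prod_{0\leq i<per(\theta)} \mathfrak{w}_{\varphi^{i}(\theta)}=r^{per(\theta)}\Big\}.\] Then \[{\rm Eigen}(\sigma_{\varphi,\mathfrak{w}},V^\Gamma)=\begin{cases} F\setminus\{0\}, & W(\varphi)\not\subseteq \downarrow\mathfrak{Z},\ \Gamma=\varphi(\Gamma\setminus\mathfrak{Z}),\\ F, & W(\varphi)\not\subseteq\downarrow\mathfrak{Z},\ \Gamma\neq\varphi(\Gamma\setminus\mathfrak{Z}),\\ \mathsf{M}, & W(\varphi)\subseteq \downarrow\mathfrak{Z},\ \Gamma=\varphi(\Gamma\setminus\mathfrak{Z}),\\ \mathsf{M}\cup\{0\}, & W(\varphi)\subseteq\downarrow\mathfrak{Z},\ \Gamma\neq\varphi(\Gamma\setminus\mathfrak{Z}). \end{cases}\]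
   Context: For a linear map $T:W\to W$ on an $F$-vector space $W$, ${\rm Eigen}(T,W)$ is the set of all $r\in F$ such that $T(x)=rx$ for some nonzero $x\in W$. $\mathfrak{Z}:=\{\alpha\in\Gamma:\mathfrak{w}_\alpha=0\}$ and $\downarrow\mathfrak{Z}:=\bigcup_{n\geq0}\varphi^{-n}(\mathfrak{Z})$ (with $\varphi^0$ the identity). A point $a\in\Gamma$ is wandering if the sequence $(\varphi^n(a))_{n\geq1}$ is one-to-one; $W(\varphi)$ is the set of wandering points. $a$ is periodic if $\varphi^n(a)=a$ for some $n\geq1$; $P(\varphi)$ is the set of periodic points, and for $\alpha\in P(\varphi)$, $per(\alpha)=\min\{n\geq1:\varphi^n(\alpha)=\alpha\}$. *)

From HB Require Import structures.
From mathcomp Require Import all_boot all_order all_algebra.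
From mathcomp Require Import boolp classical_sets functions.
Set Implicit Arguments. Unset Strict Implicit. Unset Printing Implicit Defensive.
Import Order.TTheory GRing.Theory Num.Theory.
Local Open Scope ring_scope.
Local Open Scope classical_set_scope.

Definition Eigen (F : fieldType) (W : lmodType F) (T : W -> W) : set F :=
  [set r | exists x : W, x <> 0 /\ T x = r *: x].

Definition sigma_op (F : fieldType) (V : lmodType F) (Gamma : Type)
  (phi : Gamma -> Gamma) (w : Gamma -> F) : (Gamma -> V) -> (Gamma -> V) :=
  fun x a => w a *: x (phi a).

Definition Zset (F : fieldType) (Gamma : Type) (w : Gamma -> F) : set Gamma :=
  [set a | w a = 0].

Definition downZ (F : fieldType) (Gamma : Type) (phi : Gamma -> Gamma)
  (w : Gamma -> F) : set Gamma :=
  [set a | exists n : nat, Zset w (iter n phi a)].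

Definition wandering (Gamma : Type) (phi : Gamma -> Gamma) : set Gamma :=
  [set a | forall m n : nat, (1 <= m)%N -> (1 <= n)%N ->
     iter m phi a = iter n phi a -> m = n].

Definition periodic (Gamma : Type) (phi : Gamma -> Gamma) : set Gamma :=
  [set a | exists n : nat, (1 <= n)%N /\ iter n phi a = a].

Definition is_per (Gamma : Type) (phi : Gamma -> Gamma) (a : Gamma) (n : nat) : Prop :=
  [/\ (1 <= n)%N, iter n phi a = a &
      forall m : nat, (1 <= m)%N -> iter m phi a = a -> (n <= m)%N].

Definition Mset (F : fieldType) (Gamma : Type) (phi : Gamma -> Gamma)
  (w : Gamma -> F) : set F :=
  [set r | r != 0 /\ exists theta : Gamma, exists p : nat,
     periodic phi theta /\ ~ downZ phi w theta /\ is_per phi theta p /\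
     \prod_(i < p) w (iter i phi theta) = r ^+ p].

Definition surj_off_Z (F : fieldType) (Gamma : Type) (phi : Gamma -> Gamma)
  (w : Gamma -> F) : Prop :=
  [set: Gamma] = phi @` (~` Zset w).

From HB Require Import structures.
From mathcomp Require Import all_boot all_order all_algebra.
From mathcomp Require Import boolp classical_sets functions.
From mathcomp Require Import ring zify.
Import Order.TTheory GRing.Theory Num.Theory.
Local Open Scope ring_scope.
Local Open Scope classical_set_scope.
Set Implicit Arguments. Unset Strict Implicit.

(* Let [w^(n)(b)] ([orbit_prod n b]) be the product of the weights along the
   first [n] steps of the orbit of [b]. An eigenvector [x] for [r] satisfies
   [w_b x(phi b) = r x(b)]. For [r = 0] this says that [x] vanishes on
   [phi(Gamma \ Z)], so [0] is an eigenvalue iff this image is proper.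
   For [r <> 0] the support of [x] is forward invariant and misses [downZ]; the
   orbit of a point of the support either wanders or falls into a cycle of some
   period [p], along which [r^p x = w^(p) x] forces [w^(p) = r^p].
   Conversely, [x(phi^m a) := r^m / w^(m)(a) v] is consistent on the forward
   orbit of [a] when the orbit is injective, or when [a] is periodic with
   [w^(p)(a) = r^p]; it extends backwards by [x b := r^-k w^(k)(b) x(phi^k b)]
   and by zero off the backward closure of the orbit. *)

Lemma scalerIl (K : fieldType) (U : lmodType K) (v : U) :
  v != 0 -> injective ( *:%R^~ v : K -> U).
Proof.
move=> v0 a b /eqP; rewrite -subr_eq0 -scalerBl scaler_eq0 (negbTE v0) orbF.
by rewrite subr_eq0 => /eqP.
Qed.

Section Dynamics.

Variables (T : Type) (f : T -> T).

Lemma wandering_iter_inj a : wandering f a -> injective (fun n => iter n f a).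
Proof. by move=> wa m n e; have [] : m.+1 = n.+1 by apply: wa => //; rewrite !iterS e. Qed.

Lemma not_wandering_periodic a : ~ wandering f a -> exists m, periodic f (iter m f a).
Proof.
move=> nwa; apply: contrapT => nper; apply: nwa => m n m1 n1 e.
apply: contrapT => mn; apply: nper.
wlog lt : m n m1 n1 e mn / (m < n)%N.
  move=> W; case: (ltngtP m n) => l; first exact: (W m n).
    exact: (W n m n1 m1 (esym e) (nesym mn) l).
  by move: mn; rewrite l.
exists m, (n - m)%N; split; first by rewrite subn_gt0.
by rewrite -iterD subnK ?(ltnW lt).
Qed.

Lemma periodic_per a : periodic f a -> exists p, is_per f a p.
Proof.
move=> per_a.
have exP : exists k, `[< (1 <= k)%N /\ iter k f a = a >].
  by have [k ka] := per_a; exists k; apply/asboolP.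
have [p /asboolP [p1 pa] pmin] := ex_minnP exP.
by exists p; split => // k k1 ka; apply: pmin; apply/asboolP.
Qed.

Variables (a : T) (p : nat).
Hypothesis per_a : is_per f a p.

Lemma iter_per_mul q : iter (q * p) f a = a.
Proof.
have [_ pa _] := per_a.
by elim: q => [|q IHq] //; rewrite mulSn iterD IHq.
Qed.

Lemma iter_per_mod m : iter m f a = iter (m %% p) f a.
Proof. by rewrite {1}(divn_eq m p) addnC iterD iter_per_mul. Qed.

Lemma iter_per_inj u u' : (u < p)%N -> (u' < p)%N -> iter u f a = iter u' f a -> u = u'.
Proof.
have [_ pa pmin] := per_a.
wlog uu' : u u' / (u <= u')%N.
  move=> W up u'p e; case: (leqP u u') => l; first exact: W.
  by rewrite (W u' u (ltnW l) u'p up (esym e)).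
move=> _ u'p e; apply/eqP; rewrite eqn_leq uu' /=; apply: contraT; rewrite -ltnNge => lt.
have cyc : iter (p - u' + u) f a = a by rewrite iterD e -iterD subnK // ltnW.
have pos : (0 < p - u' + u)%N by rewrite addn_gt0 subn_gt0 u'p.
by have := pmin _ pos cyc; clear -lt u'p; lia.
Qed.

Lemma iter_per_eq_mod m n : iter m f a = iter n f a -> m = n %[mod p].
Proof.
have [p1 _ _] := per_a.
by rewrite iter_per_mod (iter_per_mod n) => /iter_per_inj; apply; rewrite ltn_pmod.
Qed.

End Dynamics.

Section WeightedShift.

Variables (F : fieldType) (V : lmodType F) (Gamma : Type).
Variables (phi : Gamma -> Gamma) (w : Gamma -> F).

Local Notation sigma := (@sigma_op F V Gamma phi w).

Definition orbit_prod (n : nat) (a : Gamma) : F := \prod_(i < n) w (iter i phi a).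

Lemma orbit_prod0 a : orbit_prod 0 a = 1.
Proof. exact: big_ord0. Qed.

Lemma orbit_prodSr n a : orbit_prod n.+1 a = orbit_prod n a * w (iter n phi a).
Proof. exact: big_ord_recr. Qed.

Lemma orbit_prodSl n a : orbit_prod n.+1 a = w a * orbit_prod n (phi a).
Proof.
by rewrite /orbit_prod big_ord_recl; congr (_ * _); apply: eq_bigr => i _; rewrite -iterSr.
Qed.

Lemma orbit_prodD m n a :
  orbit_prod (m + n) a = orbit_prod m a * orbit_prod n (iter m phi a).
Proof.
rewrite /orbit_prod big_split_ord; congr (_ * _).
by apply: eq_bigr => i _; rewrite /= addnC iterD.
Qed.

Lemma downZ_iter n a : downZ phi w (iter n phi a) -> downZ phi w a.
Proof. by move=> [k zk]; exists (k + n)%N; rewrite /Zset iterD. Qed.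

Lemma notin_downZ_weight n a : ~ downZ phi w a -> w (iter n phi a) != 0.
Proof. by move=> nZa; apply/eqP => wn0; apply: nZa; exists n. Qed.

Lemma orbit_prod_neq0 n a : ~ downZ phi w a -> orbit_prod n a != 0.
Proof. by move=> nZa; apply/prodf_neq0 => i _; exact: notin_downZ_weight. Qed.

Lemma sigma_eigenE (x : Gamma -> V) (r : F) :
  sigma x = r *: x -> forall b, w b *: x (phi b) = r *: x b.
Proof. by move=> ex b; have := congr1 (fun g => g b) ex; rewrite scalrfctE. Qed.

Lemma eigen_eq_iter (S : set Gamma) (y : Gamma -> V) (r : F) :
  (forall b, S b -> S (phi b)) ->
  (forall b, S b -> w b *: y (phi b) = r *: y b) ->
  forall n b, S b -> r ^+ n *: y b = orbit_prod n b *: y (iter n phi b).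
Proof.
move=> Sphi yS; elim=> [|n IHn] b Sb; first by rewrite expr0 orbit_prod0 !scale1r.
rewrite exprSr -scalerA -yS // scalerA mulrC -scalerA IHn; last exact: Sphi.
by rewrite scalerA -orbit_prodSl iterSr.
Qed.

Lemma sigma_eigen_iter (x : Gamma -> V) (r : F) : sigma x = r *: x ->
  forall n b, r ^+ n *: x b = orbit_prod n b *: x (iter n phi b).
Proof.
move=> ex n b.
exact: (eigen_eq_iter (S := setT)) (fun _ _ => I) (fun b _ => sigma_eigenE ex b) n b I.
Qed.

Lemma sigma_eigen_step (x : Gamma -> V) (r : F) b : sigma x = r *: x -> r != 0 ->
  x b != 0 -> w b != 0 /\ x (phi b) != 0.
Proof.
move=> ex r0 xb0; have : r *: x b != 0 by rewrite scaler_eq0 negb_or r0.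
by rewrite -(sigma_eigenE ex) scaler_eq0 negb_or => /andP.
Qed.

Lemma Eigen_sigma_of_invariant (S : set Gamma) (y : Gamma -> V) (r : F) b0 :
  r != 0 -> (forall b, S b -> S (phi b)) ->
  (forall b, S b -> w b *: y (phi b) = r *: y b) ->
  S b0 -> y b0 != 0 -> Eigen sigma r.
Proof.
move=> r0 Sphi yS Sb0 yb0.
pose ext b k : V := (r^-1 ^+ k * orbit_prod k b) *: y (iter k phi b).
have ext_shift b k d : S (iter k phi b) -> ext b (k + d)%N = ext b k.
  move=> Sk; set c := iter k phi b.
  have back : (r^-1 ^+ d * orbit_prod d c) *: y (iter d phi c) = y c.
    by rewrite -scalerA -(eigen_eq_iter Sphi yS d Sk) scalerA -exprMn mulVf // expr1n scale1r.
  by rewrite /ext orbit_prodD exprD [(k + d)%N]addnC iterD mulrACA -[in LHS]scalerA back.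
have ext_const b k l : S (iter k phi b) -> S (iter l phi b) -> ext b k = ext b l.
  wlog kl : k l / (k <= l)%N.
    move=> W Sk Sl; case: (leqP k l) => kl; first exact: W.
    by rewrite (W l k (ltnW kl) Sl Sk).
  by move=> Sk _; rewrite -(subnKC kl) ext_shift.
pose hits b := [set k | S (iter k phi b)].
pose x b : V := if `[< exists k, hits b k >] then ext b (xget 0%N (hits b)) else 0.
have xE b k : S (iter k phi b) -> x b = ext b k.
  move=> Sk; have hb : exists k, hits b k by exists k.
  by rewrite /x (asboolT hb); apply: ext_const (xgetPex 0%N hb) Sk.
exists x; split.
  move/(congr1 (fun g => g b0)); rewrite (xE b0 0%N Sb0) /ext expr0 orbit_prod0 mul1r scale1r.
  by move/eqP; rewrite (negbTE yb0).
apply: funext => b; rewrite /sigma_op scalrfctE.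
have [[k Sk]|nhb] := pselect (exists k, hits b k); last first.
  rewrite /x !asboolF ?scaler0 // => -[k Sk]; apply: nhb.
  by exists k.+1; move: Sk; rewrite /hits /= -iterS iterSr.
have Sk1 : S (iter k phi (phi b)) by rewrite -iterSr iterS; apply: Sphi.
rewrite (xE _ _ Sk1) (xE b k.+1) /ext ?iterSr // !scalerA.
by congr (_ *: _); rewrite orbit_prodSl exprS -mulrA mulVKf // mulrCA.
Qed.

Definition orbit_coef (r : F) (a : Gamma) (m : nat) : F := r ^+ m / orbit_prod m a.

Lemma Eigen_sigma_of_orbit (r : F) a (v : V) :
  r != 0 -> v != 0 -> ~ downZ phi w a ->
  (forall m n, iter m phi a = iter n phi a -> orbit_coef r a m = orbit_coef r a n) ->
  Eigen sigma r.
Proof.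
move=> r0 v0 nZa coef_const.
pose S b := exists m, iter m phi a = b.
pose index_of b := [set m | iter m phi a = b].
pose y b : V := orbit_coef r a (xget 0%N (index_of b)) *: v.
have yE m : y (iter m phi a) = orbit_coef r a m *: v.
  have hm : exists n, index_of (iter m phi a) n by exists m.
  by rewrite /y; have /coef_const -> := xgetPex 0%N hm.
apply: (@Eigen_sigma_of_invariant S y r a) => //.
- by move=> _ [m <-]; exists m.+1.
- move=> _ [m <-]; rewrite -iterS !yE !scalerA; congr (_ *: _).
  rewrite /orbit_coef orbit_prodSr exprS invfM.
  have wm0 := notin_downZ_weight m nZa; have Wm0 := orbit_prod_neq0 m nZa.
  by field; rewrite wm0 Wm0.
- by exists 0%N.
- by rewrite (yE 0%N) /orbit_coef expr0 orbit_prod0 divr1 scale1r.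
Qed.

Lemma Eigen_sigma_wandering (r : F) a (v : V) :
  r != 0 -> v != 0 -> wandering phi a -> ~ downZ phi w a -> Eigen sigma r.
Proof.
move=> r0 v0 wa nZa.
by apply: (Eigen_sigma_of_orbit r0 v0 nZa) => m n /(wandering_iter_inj wa) ->.
Qed.

Lemma orbit_coef_mod (r : F) a p : is_per phi a p -> r != 0 -> ~ downZ phi w a ->
  orbit_prod p a = r ^+ p -> forall m, orbit_coef r a m = orbit_coef r a (m %% p).
Proof.
move=> [_ pa _] r0 nZa cycle m.
have coef_shift n : orbit_coef r a (p + n) = orbit_coef r a n.
  rewrite /orbit_coef orbit_prodD pa cycle exprD invfM mulrACA mulfV ?mul1r //.
  exact: expf_neq0.
rewrite {1}(divn_eq m p); elim: (m %/ p)%N => [|q IHq]; first by rewrite add0n.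
by rewrite mulSn -addnA coef_shift.
Qed.

Lemma Eigen_sigma_Mset (r : F) (v : V) : v != 0 -> Mset phi w r -> Eigen sigma r.
Proof.
move=> v0 [r0 [th [p [_ [nZth [per_th cycle]]]]]].
apply: (Eigen_sigma_of_orbit r0 v0 nZth) => m n /(iter_per_eq_mod per_th) mn.
have coef_mod := orbit_coef_mod per_th r0 nZth cycle.
by rewrite (coef_mod m) (coef_mod n) mn.
Qed.

Lemma Eigen_sigma_neq0_cases (r : F) : r != 0 -> Eigen sigma r ->
  (exists a, wandering phi a /\ ~ downZ phi w a) \/ Mset phi w r.
Proof.
move=> r0 [x [x0 ex]].
have [a xa0] : exists a, x a != 0.
  apply: contrapT => nx; apply: x0; apply: funext => a.
  by apply: contrapT => xa0; apply: nx; exists a; apply/eqP.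
have x_orbit n : x (iter n phi a) != 0.
  by elim: n => [|n IHn] //=; have [] := sigma_eigen_step ex r0 IHn.
have nZa : ~ downZ phi w a.
  by move=> [n /eqP wn0]; have [] := sigma_eigen_step ex r0 (x_orbit n); rewrite wn0.
have [wa|nwa] := pselect (wandering phi a); first by left; exists a.
have [m per_th] := not_wandering_periodic nwa.
have [p per_p] := periodic_per per_th; have [_ pa _] := per_p.
right; split=> //; exists (iter m phi a), p; split=> //; split; first by move/downZ_iter.
split=> //; apply: (scalerIl (x_orbit m)).
by have := sigma_eigen_iter ex p (iter m phi a); rewrite pa => ->.
Qed.

Lemma Eigen_sigma0 (v : V) : v != 0 -> Eigen sigma 0 <-> ~ surj_off_Z phi w.
Proof.
move=> v0; split.
  move=> [x [x0 ex]] surj; apply: x0; apply: funext => b.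
  have : [set: Gamma] b by [].
  rewrite surj => -[a /= wa0 <-].
  have := sigma_eigenE ex a; rewrite scale0r => /eqP; rewrite scaler_eq0.
  by case/orP => /eqP // wa; case: wa0.
move=> nsurj.
have /nonsubset [b0 [_ nb0]] : ~ [set: Gamma] `<=` phi @` (~` Zset w).
  by move=> sub; apply: nsurj; apply/seteqP; split.
pose x b : V := if `[< b = b0 >] then v else 0.
exists x; split.
  by move/(congr1 (fun g => g b0)); rewrite /x asboolT // => /eqP; rewrite (negbTE v0).
apply: funext => b; rewrite /sigma_op scalrfctE scale0r.
have [pb|npb] := pselect (phi b = b0); last by rewrite /x asboolF // scaler0.
suff -> : w b = 0 by rewrite scale0r.
by apply: contrapT => wb0; apply: nb0; exists b.
Qed.

Lemma Eigen_sigmaE (v : V) : v != 0 -> Eigen sigma =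
  [set r | (r = 0 /\ ~ surj_off_Z phi w) \/
           (r != 0 /\ ((exists a, wandering phi a /\ ~ downZ phi w a) \/ Mset phi w r))].
Proof.
move=> v0; apply/seteqP; split => r /=.
  have [-> /(Eigen_sigma0 v0)|r0 Er] := eqVneq r 0; first by left.
  by right; split => //; apply: Eigen_sigma_neq0_cases.
case=> [[-> nsurj]|[r0 [[a [wa nZa]]|Mr]]].
- exact/(Eigen_sigma0 v0).
- exact: Eigen_sigma_wandering r0 v0 wa nZa.
- exact: Eigen_sigma_Mset v0 Mr.
Qed.

End WeightedShift.

Unset Implicit Arguments. Set Strict Implicit.

Theorem theorem2p9 (F : fieldType) (V : lmodType F) (Gamma : Type)
  (phi : Gamma -> Gamma) (w : Gamma -> F)
  (hV : exists v : V, v != 0) (hGamma : inhabited Gamma) :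
  let E := Eigen (@sigma_op F V Gamma phi w) in
  [/\ (~ (wandering phi `<=` downZ phi w) -> surj_off_Z phi w ->
         E = [set r | r != 0]),
      (~ (wandering phi `<=` downZ phi w) -> ~ surj_off_Z phi w ->
         E = [set: F]),
      (wandering phi `<=` downZ phi w -> surj_off_Z phi w ->
         E = Mset phi w) &
      (wandering phi `<=` downZ phi w -> ~ surj_off_Z phi w ->
         E = Mset phi w `|` [set 0])].
Proof.
move=> E; have [v v0] := hV; rewrite {}/E (Eigen_sigmaE phi w v0).
have wander_iff : ~ (wandering phi `<=` downZ phi w) <->
    exists a, wandering phi a /\ ~ downZ phi w a.
  split; first by move/nonsubset => [a [wa nZa]]; exists a.
  by move=> [a [wa nZa]] sub; apply/nZa/sub.
have M0 r : Mset phi w r -> r != 0 by case.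
split=> [/wander_iff W surj|/wander_iff W nsurj|sub surj|sub nsurj];
  apply/seteqP; split=> r /=.
- by case=> [[_ /(_ surj)]|[]].
- by move=> r0; right; split=> //; left.
- by [].
- by move=> _; have [->|r0] := eqVneq r 0; [left | right; split=> //; left].
- by case=> [[_ /(_ surj)]|[r0 [/wander_iff /(_ sub)|]]].
- by move=> Mr; right; split; [exact: M0 | right].
- by case=> [[-> _]|[r0 [/wander_iff /(_ sub)|Mr]]]; [right | | left].
- by case=> [Mr|->]; [right; split; [exact: M0 | right] | left].
Qed.
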